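(* Let $\mathbb K$ be a field, $x\in\mathbb K$, $0\le r\le k$, and let $\chi_k^{(r)}$ be the character (trace function) of the module $\mathsf C_k^{(r)}$. Then for $0\le\ell\le k$, $$\chi_k^{(r)}(\mathbf 1_{\ell,k})=\begin{cases}\mathsf m_{\ell,r}=\dim\mathsf C_\ell^{(r)},& r\le\ell,\\ 0,& r>\ell.\end{cases}$$
   Context: A Motzkin $k$-diagram has top vertices $1,\dots,k$ and bottom vertices $1',\dots,k'$, edges each joining two distinct vertices, each vertex on at most one edge, edges planar. $\mathsf M_k(x)$ is the free $\mathbb K$-module on Motzkin $k$-diagrams with product: stack $d_1$ above $d_2$, let $d_3$ join outer vertices connected by a path, $d_1d_2=x^\kappa d_3$ with $\kappa$ the number of closed middle loops. $\mathbf 1_{\ell,k}$ is the diagram with vertical edges $j$—$j'$ for $j\le\ell$ and all other vertices isolated. Motzkin paths: $p=(a_1,\dots,a_k)$, $a_i\in\{-1,0,1\}$, partial sums $\ge0$, rank $\sum a_i$; $\mathcal P_k^r$ those of rank $r$, $\mathsf m_{k,r}=|\mathcal P_k^r|$. Index $i$ with $a_i=1$ is paired with the smallest $j>i$ with $a_i+\dots+a_j=0$ if it exists. 1-factor of $p$: row of vertices $1..k$, paired indices joined by an edge, unpaired $a_i=1$ white, others black. $\mathsf C_k^{(r)}$: free $\mathbb K$-module on $\mathcal P_k^r$ with $d\cdot p=x^{\kappa(d,p)}q$ if $\mathrm{rank}(q)=r$ and $0$ otherwise, where $d$ is placed above the 1-factor of $p$ (bottom vertex $i'$ identified with vertex $i$),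 $\kappa(d,p)$ is the number of closed loops formed, and $q$ is the 1-factor on the top vertices in which two top vertices are joined iff in a common component and a top vertex is white iff its component contains a white vertex of $p$. *)

From HB Require Import structures.
From mathcomp Require Import all_boot all_order all_algebra.
Set Implicit Arguments. Unset Strict Implicit. Unset Printing Implicit Defensive.
Import Order.TTheory GRing.Theory Num.Theory.
Local Open Scope ring_scope.

(* Motzkin k-diagrams.  Vertices are pairs (b, i) with i : 'I_k (0-indexed,  *)
(* so i stands for vertex i+1); b = true is the top row, b = false the       *)
(* bottom row.  A diagram is given by its partner function (None = isolated). *)
Definition vert (k : nat) := (bool * 'I_k)%type.
Definition mdiag (k : nat) := vert k -> option (vert k).

(* position of a vertex on the boundary of the rectangle, read clockwise:     *)
(* top 1..k left to right, then bottom k'..1'                                 *)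
Definition bpos k (v : vert k) : nat :=
  if v.1 then val v.2 else (2 * k - 1 - val v.2)%N.

(* Being a Motzkin k-diagram: symmetric partner relation, no loops, planar. *)
Definition is_motzkin_diagram k (d : mdiag k) : Prop :=
  (forall u v, d u = Some v -> d v = Some u) /\
  (forall u, d u <> Some u) /\
  (forall a b c e, d a = Some b -> d c = Some e ->
     ~ [/\ bpos a < bpos c, bpos c < bpos b & bpos b < bpos e]%N).

(* the diagram 1_{l,k}: vertical edges j -- j' for j <= l (0-indexed: j < l) *)
Definition one_lk (l k : nat) : mdiag k :=
  fun v => if (val v.2 < l)%N then Some (~~ v.1, v.2) else None.

(* Motzkin paths: a step sequence a : 'I_k -> {-1,0,1}, encoded by          *)
(* f : {ffun 'I_k -> 'I_3} with a_i = f i - 1.                               *)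
Definition mpath (k : nat) := {ffun 'I_k -> 'I_3}.

Definition step k (f : mpath k) (i : 'I_k) : int := (val (f i))%:Z - 1.

Definition seg k (f : mpath k) (i j : nat) : int :=
  \sum_(t < k | (i <= t <= j)%N) step f t.

Definition is_motzkin k (f : mpath k) : bool :=
  [forall j : 'I_k, (0 <= seg f 0 j)%R].

Definition rank k (f : mpath k) : int := \sum_(i < k) step f i.

Definition Pkr (k r : nat) : {set mpath k} :=
  [set f : mpath k | is_motzkin f & rank f == r%:Z].
Definition mkr (k r : nat) : nat := #|Pkr k r|.

Definition paired k (f : mpath k) (i j : 'I_k) : bool :=
  [&& step f i == 1, (i < j)%N, seg f i j == 0 &
      [forall t : 'I_k, ((i <= t < j)%N) ==> (seg f i t != 0)]].

Definition fedge k (f : mpath k) (i j : 'I_k) : bool := paired f i j || paired f j i.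
Definition white k (f : mpath k) (i : 'I_k) : bool :=
  (step f i == 1) && ~~ [exists j, paired f i j].

(* The action  d . p : d is placed above the 1-factor of p; the bottom vertex *)
(* (false, i) of d is identified with vertex i of the 1-factor.               *)
Section Action.
Variables (k : nat) (d : mdiag k) (f : mpath k).

Definition sedge : rel (vert k) := fun u v =>
  [|| d u == Some v, d v == Some u | [&& ~~ u.1, ~~ v.1 & fedge f u.2 v.2]].

Definition sdeg (v : vert k) : nat :=
  ((d v != None) + (~~ v.1 && [exists j, fedge f v.2 j]))%N.

(* number of closed loops: components all of whose vertices have degree 2 *)
Definition kappa : nat :=
  #|[set [set w | connect sedge v w] | v in
       [pred v : vert k | [forall w, connect sedge v w ==> (sdeg w == 2%N)]]]|.

(* resulting 1-factor on the top vertices, read back as a step sequence:     *)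
(* left end of an edge or white -> 1, right end -> -1, black -> 0             *)
Definition res_path : mpath k := [ffun i : 'I_k =>
  if [exists j : 'I_k, (i < j)%N && connect sedge (true, i) (true, j)] then inord 2
  else if [exists j : 'I_k, (j < i)%N && connect sedge (true, i) (true, j)] then inord 0
  else if [exists m : 'I_k, connect sedge (true, i) (false, m) && white f m] then inord 2
  else inord 1].

End Action.

Definition act_coef (K : fieldType) (x : K) k r (d : mdiag k) (p p' : mpath k) : K :=
  if (rank (res_path d p) == r%:Z) && (res_path d p == p') then x ^+ kappa d p else 0.

Definition rep_mx (K : fieldType) (x : K) k r (d : mdiag k) : 'M[K]_(mkr k r) :=
  \matrix_(i, j) act_coef x r d (enum_val (A := Pkr k r) j) (enum_val (A := Pkr k r) i).

Definition chi (K : fieldType) (x : K) k r (d : mdiag k) : K := \tr (rep_mx x r d).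
Arguments one_lk l k : clear implicits.

From HB Require Import structures.
From mathcomp Require Import all_boot all_order all_algebra.
From mathcomp Require Import zify.
Import Order.TTheory GRing.Theory Num.Theory.
Set Implicit Arguments. Unset Strict Implicit.
Local Open Scope ring_scope.

(* Stacking 1_{l,k} on the 1-factor of a Motzkin path p never closes a loop:  *)
(* every top vertex has degree at most one, and a bottom vertex of degree two  *)
(* is joined to its top vertex.  Hence the diagonal entry of 1_{l,k} at p is   *)
(* 1 if 1_{l,k} . p = p and 0 otherwise, and the character counts the fixed    *)
(* points.  Top vertices j > l are isolated, so a fixed point has only level   *)
(* steps after position l; conversely, if p is flat after l, every arc and     *)
(* every white vertex of its 1-factor lives in the first l positions, where    *)
(* 1_{l,k} is the identity, so p is fixed.  Paths of length k and rank r that  *)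
(* are flat after l correspond, by truncation and padding with level steps,   *)
(* to paths in P_l^r, and there are none when l < r since rank <= length.     *)

Section PrefixSums.
Variables (k : nat) (f : mpath k).

Definition prefix (n : nat) : int := \sum_(t < k | (t < n)%N) step f t.

Lemma step_cases i : [\/ step f i = -1, step f i = 0 | step f i = 1].
Proof. by rewrite /step; case: (f i) => [[|[|[|m]]] Hm] //=; constructor. Qed.

Lemma step_bound i : -1 <= step f i <= 1.
Proof. by case: (step_cases i) => ->. Qed.

Lemma prefix0 : prefix 0 = 0.
Proof. by rewrite /prefix big_pred0. Qed.

Lemma prefixS (i : 'I_k) : prefix i.+1 = prefix i + step f i.
Proof.
rewrite /prefix (bigD1 i) //= addrC; congr (_ + _).
by apply: eq_bigl => t; rewrite ltnS -val_eqE /= ltn_neqAle andbC.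
Qed.

Lemma prefix_ge n : (k <= n)%N -> prefix n = prefix k.
Proof.
by move=> kn; apply: eq_bigl => t; rewrite (ltn_ord t) (leq_trans (ltn_ord t) kn).
Qed.

Lemma seg_prefix a b : (a <= b.+1)%N -> seg f a b = prefix b.+1 - prefix a.
Proof.
move=> hab; rewrite /prefix (bigID (fun t : 'I_k => (t < a)%N)) /= addrC.
have -> : \sum_(i < k | (i < b.+1)%N && (i < a)%N) step f i
          = \sum_(t < k | (t < a)%N) step f t.
  apply: eq_bigl => t; apply/idP/idP => [/andP[]//|h].
  by rewrite h andbT (leq_trans h).
by rewrite addrK /seg; apply: eq_bigl => t; rewrite ltnS -leqNgt andbC.
Qed.

Lemma motzkin_prefix_ge0 (i : 'I_k) : is_motzkin f -> 0 <= prefix i.+1.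
Proof. by move=> /forallP/(_ i); rewrite seg_prefix // prefix0 subr0. Qed.

Lemma motzkinP : is_motzkin f <-> (forall n, 0 <= prefix n).
Proof.
split=> [M n|H]; last first.
  by apply/forallP => j; rewrite seg_prefix // prefix0 subr0.
wlog nk : n / (n <= k)%N.
  by move=> W; have [/W//|/ltnW kn] := leqP n k; rewrite prefix_ge ?W.
case: n nk => [|m mk]; first by rewrite prefix0.
exact: (motzkin_prefix_ge0 (Ordinal mk)).
Qed.

Lemma pairedP (a b : 'I_k) : paired f a b <->
  [/\ step f a = 1, (a < b)%N, prefix b.+1 = prefix a &
      forall t : 'I_k, (a <= t < b)%N -> prefix t.+1 != prefix a].
Proof.
have le_ab1 : (a < b)%N -> (a <= b.+1)%N by move=> /ltnW /leqW.
split.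
  case/and4P=> /eqP s1 ab /eqP e /forallP H; split=> //.
    by apply/eqP; rewrite -subr_eq0 -seg_prefix ?le_ab1 // e.
  move=> t /andP[hat tb]; have := H t; rewrite hat tb /= seg_prefix ?subr_eq0 //.
  exact: leqW.
case=> s1 ab e H; apply/and4P; split; rewrite ?s1 //.
  by rewrite seg_prefix ?le_ab1 // e subrr.
apply/forallP=> t; apply/implyP=> /andP[hat tb].
by rewrite seg_prefix ?subr_eq0 ?H ?hat ?tb ?leqW.
Qed.

Lemma paired_above (a b : 'I_k) : paired f a b ->
  forall t : nat, (a <= t < b)%N -> prefix a < prefix t.+1.
Proof.
case/pairedP=> s1 ab e H; elim=> [|t IH] /andP[hat tb].
  have a0 : val a = 0%N by apply/eqP; rewrite -leqn0.
  by rewrite -[in X in _ < X]a0 prefixS s1 ltrDl.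
have tk : (t.+1 < k)%N by apply: ltn_trans tb (ltn_ord b).
have -> : t.+1 = Ordinal tk by [].
rewrite prefixS; have [ea|nea] := eqVneq (val a) t.+1.
  have -> : Ordinal tk = a by apply: val_inj.
  by rewrite s1 ltrDl.
have lt_at : prefix a < prefix t.+1.
  by apply: IH; rewrite (ltn_trans (ltnSn t) tb) andbT -ltnS ltn_neqAle nea.
have := H (Ordinal tk); rewrite hat tb prefixS => /(_ isT) ne.
have /andP[lo _] := step_bound (Ordinal tk).
by rewrite lt_neqAle eq_sym ne /=; move: lt_at lo => /=; lia.
Qed.

Lemma paired_right (a b : 'I_k) : paired f a b -> step f b = -1.
Proof.
move=> P; have above := paired_above P; case/pairedP: P => _ ab e _.
have b_pos : (0 < b)%N by apply: leq_ltn_trans ab.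
have /above : (a <= b.-1 < b)%N by apply/andP; split; lia.
rewrite prefixS in e; rewrite prednK // => lt.
by have /andP[lo _] := step_bound b; move: lt lo e; lia.
Qed.

Lemma fedge_sym (a b : 'I_k) : fedge f a b = fedge f b a.
Proof. by rewrite /fedge orbC. Qed.

Lemma fedge_uniq (a b c : 'I_k) : fedge f a b -> fedge f a c -> b = c.
Proof.
have right_uniq (a' b' c' : 'I_k) :
    paired f a' b' -> paired f a' c' -> (b' < c')%N -> False.
  move=> /pairedP[_ ab e _] /pairedP[_ ac _ H] bc.
  by have := H b'; rewrite (ltnW ab) bc e eqxx => /(_ isT).
have left_uniq (a' b' c' : 'I_k) :
    paired f b' a' -> paired f c' a' -> (b' < c')%N -> False.
  move=> Pb /pairedP[_ ca e _] bc.
  have /(paired_above Pb) : (b' <= c'.-1 < a')%N by apply/andP; split; lia.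
  by rewrite prednK; [case/pairedP: Pb => _ _ <- _; rewrite e ltxx | lia].
move=> /orP[Pb|Pb] /orP[Pc|Pc].
- case: (ltngtP b c) => [|| /val_inj //].
  + by move/(right_uniq _ _ _ Pb Pc).
  + by move/(right_uniq _ _ _ Pc Pb).
- by case/pairedP: Pb => s1 _ _ _; move: (paired_right Pc); rewrite s1.
- by case/pairedP: Pc => s1 _ _ _; move: (paired_right Pb); rewrite s1.
- case: (ltngtP b c) => [|| /val_inj //].
  + by move/(left_uniq _ _ _ Pb Pc).
  + by move/(left_uniq _ _ _ Pc Pb).
Qed.

Lemma fedge_step (i j : 'I_k) : fedge f i j -> step f i != 0.
Proof. by case/orP => [/pairedP[-> _ _ _]|/paired_right ->]. Qed.

Lemma fedge_paired (i j : 'I_k) : fedge f i j -> (i < j)%N -> paired f i j.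
Proof.
case/orP => // /pairedP[_ ji _ _] ij.
by move: (ltn_trans ij ji); rewrite ltnn.
Qed.

Lemma paired_last_low (i : 'I_k) (j : nat) : step f i = -1 -> (j <= i)%N ->
  prefix j <= prefix i.+1 ->
  (forall t, (j < t <= i)%N -> prefix i.+1 < prefix t) -> exists a, paired f a i.
Proof.
set c := prefix i.+1 => si ji pj above.
have pi : prefix i = c + 1 by rewrite /c prefixS si; lia.
have jk : (j < k)%N by apply: leq_ltn_trans ji (ltn_ord i).
have ji' : (j < i)%N by rewrite ltn_neqAle ji andbT; apply: contraTneq pj => ->; lia.
have := above j.+1; rewrite ltnSn ji' => /(_ isT).
have -> : j.+1 = (Ordinal jk).+1 by [].
rewrite prefixS; have /andP[lo hi] := step_bound (Ordinal jk) => lt.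
have sj : step f (Ordinal jk) = 1 by move: pj lt hi => /=; lia.
have ej : prefix (Ordinal jk) = c by move: pj lt hi => /=; lia.
exists (Ordinal jk); apply/pairedP; split => // t /andP[jt ti]; rewrite ej.
have := above t.+1; rewrite ltnS jt ti => /(_ isT).
by rewrite lt_def eq_sym => /andP[].
Qed.

Lemma down_step_paired (i : 'I_k) : is_motzkin f -> step f i = -1 ->
  exists a, paired f a i.
Proof.
move=> /(motzkin_prefix_ge0 i) c0 si.
suff gen n : (n <= i)%N -> (forall t, (n < t <= i)%N -> prefix i.+1 < prefix t) ->
    exists a, paired f a i by apply: (gen i) => // t; lia.
elim: n => [|n IH] ni above.
  by apply: (@paired_last_low i 0 si); rewrite ?prefix0.
have [le|gt] := leP (prefix n.+1) (prefix i.+1).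
  exact: (paired_last_low si ni le above).
apply: IH => [|t /andP[nt ti]]; first lia.
by have [->//|ne] := eqVneq t n.+1; apply: above; apply/andP; split => //; lia.
Qed.

Lemma no_right_partner (i : 'I_k) : step f i != 1 -> ~~ [exists j, paired f i j].
Proof. by apply: contra => /existsP[j /pairedP[-> _ _ _]]. Qed.

Lemma no_left_partner (i : 'I_k) : step f i != -1 -> ~~ [exists j, paired f j i].
Proof. by apply: contra => /existsP[j /paired_right ->]. Qed.

End PrefixSums.

Definition flat_tail k l (p : mpath k) : bool :=
  [forall j : 'I_k, (l <= j)%N ==> (step p j == 0)].

Section UnitDiagramAction.
Variables (k l : nat) (f : mpath k).
Local Notation d := (one_lk l k).
Local Notation se := (sedge d f).

Lemma sedge_vertical b (j : 'I_k) : (j < l)%N -> se (b, j) (~~ b, j).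
Proof. by move=> jl; rewrite /sedge /one_lk /= jl eqxx. Qed.

Lemma sedge_arc (i j : 'I_k) : fedge f i j -> se (false, i) (false, j).
Proof. by move=> fe; rewrite /sedge /= fe !orbT. Qed.

Lemma sedge_column (i : 'I_k) u v : se u v ->
  (u.2 == i) || fedge f i u.2 -> (v.2 == i) || fedge f i v.2.
Proof.
case/or3P => [/eqP|/eqP|/and3P[_ _ fe]];
  try by rewrite /one_lk; case: ifP => // _ [<-].
case/orP => [/eqP <-|fi]; first by rewrite fe orbT.
by rewrite (@fedge_uniq _ f u.2 i v.2) ?eqxx // fedge_sym.
Qed.

Lemma connect_column (i : 'I_k) v :
  connect se (true, i) v -> (v.2 == i) || fedge f i v.2.
Proof.
case/connectP => p pth ->.
have : ((true, i).2 == i) || fedge f i (true, i).2 by rewrite eqxx.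
elim: p (true, i) pth => [|w p IH] u //= /andP[e pth] Pu.
exact: IH pth (sedge_column e Pu).
Qed.

Lemma connect_top_fedge (i j : 'I_k) :
  connect se (true, i) (true, j) -> j != i -> fedge f i j.
Proof. by move=> /connect_column /= /orP[/eqP->|//]; rewrite eqxx. Qed.

Lemma connect_isolated (i : 'I_k) v :
  (l <= i)%N -> connect se (true, i) v -> v = (true, i).
Proof.
rewrite leqNgt => /negbTE li /connectP [[|w p] //= /andP[e _] _].
move: e; rewrite /sedge /one_lk /= li; case/or3P => [//|/eqP|//].
by case: ifP => // wl [_ ew]; move: wl; rewrite ew li.
Qed.

Lemma res_path_isolated (i : 'I_k) : (l <= i)%N -> res_path d f i = inord 1.
Proof.
move=> li; rewrite /res_path ffunE.
case: ifP => [/existsP[j /andP[ij /(connect_isolated li) [ej]]]|_].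
  by move: ij; rewrite ej ltnn.
case: ifP => [/existsP[j /andP[ji /(connect_isolated li) [ej]]]|_].
  by move: ji; rewrite ej ltnn.
by case: ifP => // /existsP[j /andP[/(connect_isolated li)]].
Qed.

Hypothesis flat : flat_tail l f.

Lemma nonlevel_lt (j : 'I_k) : step f j != 0 -> (j < l)%N.
Proof.
by apply: contraR; rewrite -leqNgt => lj; move/forallP/(_ j): flat; rewrite lj.
Qed.

(* every arc of p lies within the first l columns, so its ends are joined *)
Lemma fedge_connect_top (i j : 'I_k) : fedge f i j -> connect se (true, i) (true, j).
Proof.
move=> fe; have il := nonlevel_lt (fedge_step fe).
have jl : (j < l)%N by apply: nonlevel_lt (@fedge_step _ f j i _); rewrite fedge_sym.
apply: connect_trans (connect1 (sedge_vertical true il)) _.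
exact: connect_trans (connect1 (sedge_arc fe)) (connect1 (sedge_vertical false jl)).
Qed.

(* the three tests defining res_path, read on the 1-factor of p *)
Lemma right_partnerE (i : 'I_k) :
  [exists j : 'I_k, (i < j)%N && connect se (true, i) (true, j)] = [exists j, paired f i j].
Proof.
apply/existsP/existsP => [[j /andP[ij c]]|[j Pij]]; exists j.
  by rewrite fedge_paired // connect_top_fedge // neq_ltn ij orbT.
case/pairedP: (Pij) => _ -> _ _; apply: fedge_connect_top; by rewrite /fedge Pij.
Qed.

Lemma left_partnerE (i : 'I_k) :
  [exists j : 'I_k, (j < i)%N && connect se (true, i) (true, j)] = [exists j, paired f j i].
Proof.
apply/existsP/existsP => [[j /andP[ji c]]|[j Pji]]; exists j.
  by rewrite fedge_paired // fedge_sym connect_top_fedge // neq_ltn ji.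
case/pairedP: (Pji) => _ -> _ _; apply: fedge_connect_top; by rewrite /fedge Pji orbT.
Qed.

Lemma white_belowE (i : 'I_k) :
  [exists m : 'I_k, connect se (true, i) (false, m) && white f m] = white f i.
Proof.
apply/existsP/idP => [[m /andP[/connect_column /= /orP[/eqP <-//|fe] wm]]|wi].
  case/andP: wm => /eqP sm /existsP[]; exists i.
  case/orP: fe => [/paired_right|//]; by rewrite sm.
have il : (i < l)%N by apply: nonlevel_lt; case/andP: wi => /eqP ->.
by exists i; rewrite wi andbT connect1 // (sedge_vertical true il).
Qed.

Lemma res_path_fixpoint : is_motzkin f -> res_path d f = f.
Proof.
move=> M; apply/ffunP => i; apply: val_inj.
rewrite /res_path ffunE right_partnerE left_partnerE white_belowE.
have vfi : step f i = (nat_of_ord (f i))%:Z - 1 by [].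
case: (step_cases f i) => si.
- have [j Pji] := down_step_paired M si.
  rewrite (negbTE (no_right_partner _)) ?si //.
  have -> : [exists j, paired f j i] by apply/existsP; exists j.
  by rewrite /= inordK //; move: vfi; rewrite si; lia.
- rewrite (negbTE (no_right_partner _)) ?(negbTE (no_left_partner _)) ?si //.
  by rewrite /white si /= inordK //; move: vfi; rewrite si; lia.
- rewrite (negbTE (no_left_partner _)) ?si //.
  have -> : (if [exists j, paired f i j] then inord 2 else if white f i then inord 2
             else inord 1) = inord 2 :> 'I_3.
    by case: ifP => // /negbT nR; rewrite /white si eqxx nR.
  by rewrite /= inordK //; move: vfi; rewrite si; lia.
Qed.

End UnitDiagramAction.

Lemma res_path_one_fixed k l (p : mpath k) :
  is_motzkin p -> (res_path (one_lk l k) p == p) = flat_tail l p.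
Proof.
move=> M; apply/eqP/idP => [fixed|flat]; last exact: res_path_fixpoint.
apply/forallP => j; apply/implyP => lj.
by rewrite /step -fixed res_path_isolated //= inordK.
Qed.

(* 1_{l,k} closes no loop: no component consists of degree-two vertices only, *)
(* since top vertices have degree at most one                                 *)
Lemma kappa_one_lk k l (p : mpath k) : kappa (one_lk l k) p = 0%N.
Proof.
apply/eqP; rewrite -leqn0; apply: leq_trans (leq_imset_card _ _) _.
rewrite leqn0; apply/eqP; apply: eq_card0 => -[b j]; rewrite !inE.
apply/negbTE; rewrite negb_forall; apply/existsP.
have top_deg (j' : 'I_k) : sdeg (one_lk l k) p (true, j') != 2%N.
  by rewrite /sdeg /=; case: (_ != None).
case: b; first by exists (true, j); rewrite connect0 top_deg.
have [jl|lj] := ltnP j l.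
  by exists (true, j); rewrite connect1 ?top_deg //; apply: (sedge_vertical _ false).
exists (false, j); rewrite connect0 /sdeg /one_lk /= ltnNge lj /=.
by case: [exists _, _].
Qed.

Lemma step_eq0 k (p : mpath k) i : (step p i == 0) = (p i == inord 1).
Proof.
by rewrite -val_eqE /= inordK // /step subr_eq0.
Qed.

Section Padding.
Variables (k l : nat) (lk : (l <= k)%N).

Definition pad (g : mpath l) : mpath k :=
  [ffun i : 'I_k => if insub (val i) is Some j then g j else inord 1].
Definition truncate (p : mpath k) : mpath l := [ffun j : 'I_l => p (widen_ord lk j)].

Lemma step_pad_ge (g : mpath l) (i : 'I_k) : (l <= i)%N -> step (pad g) i = 0.
Proof. by move=> li; apply/eqP; rewrite step_eq0 ffunE insubN // -leqNgt. Qed.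

Lemma sum_step_pad (g : mpath l) (P : pred nat) :
  \sum_(t < k | P t) step (pad g) t = \sum_(t < l | P t) step g t.
Proof.
pose F n : int := if insub n is Some j then step g j else 0.
have -> : \sum_(t < l | P t) step g t = \sum_(t < l | P t) F t.
  by apply: eq_bigr => t _; rewrite /F valK.
rewrite (big_ord_widen_cond k P F lk) [LHS](bigID (fun t : 'I_k => (t < l)%N)) /=.
rewrite [X in _ + X]big1 ?addr0 => [|t /andP[_]]; last by rewrite -leqNgt => /step_pad_ge.
apply: eq_bigr => t /andP[_ tl]; rewrite /step /F ffunE.
by case: insubP => [//|]; rewrite tl.
Qed.

Lemma rank_pad (g : mpath l) : rank (pad g) = rank g.
Proof. exact: (sum_step_pad g xpredT). Qed.

Lemma motzkin_pad (g : mpath l) : is_motzkin (pad g) = is_motzkin g.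
Proof.
have prefix_pad n : prefix (pad g) n = prefix g n.
  exact: (sum_step_pad g (fun t => (t < n)%N)).
by apply/idP/idP => /motzkinP H; apply/motzkinP => n; have := H n; rewrite prefix_pad.
Qed.

Lemma flat_tail_pad (g : mpath l) : flat_tail l (pad g).
Proof. by apply/forallP => j; apply/implyP => /step_pad_ge ->. Qed.

Lemma pad_inj : injective pad.
Proof.
move=> g1 g2 e; apply/ffunP => j.
by have := congr1 (fun p : mpath k => p (widen_ord lk j)) e; rewrite !ffunE /= valK.
Qed.

Lemma pad_truncate (p : mpath k) : flat_tail l p -> pad (truncate p) = p.
Proof.
move=> /forallP flat; apply/ffunP => i; rewrite ffunE.
case: insubP => [j _ vj|]; first by rewrite ffunE; congr (p _); apply: val_inj.
by rewrite -leqNgt => li; apply/esym/eqP; rewrite -step_eq0; have := flat i; rewrite li.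
Qed.

Lemma card_flat_tail r : #|[set p in Pkr k r | flat_tail l p]| = mkr l r.
Proof.
have -> : [set p in Pkr k r | flat_tail l p] = pad @: Pkr l r.
  apply/setP => p; rewrite !inE; apply/andP/imsetP => [[Pp flat]|[g Pg ->]].
    exists (truncate p); last by rewrite pad_truncate.
    by move: Pp; rewrite !inE -{1 2}(pad_truncate flat) rank_pad motzkin_pad.
  by rewrite flat_tail_pad; move: Pg; rewrite !inE rank_pad motzkin_pad.
exact: card_imset pad_inj.
Qed.

End Padding.

Lemma rank_le_length l (g : mpath l) : rank g <= l%:Z.
Proof.
apply: le_trans (_ : \sum_(i < l) (1 : int) <= _); last by rewrite sumr_const card_ord natz.
by apply: ler_sum => i _; case/andP: (step_bound g i).
Qed.

Lemma mkr_eq0 l r : (l < r)%N -> mkr l r = 0%N.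
Proof.
move=> lr; apply: eq_card0 => g; rewrite !inE; apply/negbTE/nandP; right.
by apply: contraTneq (rank_le_length g) => ->; rewrite lez_nat -ltnNge.
Qed.

Lemma act_coef_one_diag (K : fieldType) (x : K) k l r (p : mpath k) :
  p \in Pkr k r -> act_coef x r (one_lk l k) p p = (flat_tail l p)%:R.
Proof.
rewrite inE => /andP[M /eqP rp].
rewrite /act_coef kappa_one_lk expr0 -(res_path_one_fixed l M).
by have [->|_] := eqVneq (res_path (one_lk l k) p) p; rewrite ?rp ?eqxx ?andbF.
Qed.

Lemma chi_one_lk (K : fieldType) (x : K) k l r :
  chi x r (one_lk l k) = #|[set p in Pkr k r | flat_tail l p]|%:R.
Proof.
rewrite /chi /mxtrace; under eq_bigr do rewrite mxE.
rewrite /mkr -(big_enum_val (fun p => act_coef x r (one_lk l k) p p)) /=.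
rewrite (eq_bigr _ (fun p => @act_coef_one_diag K x k l r p)) -sumr_const.
rewrite big_mkcond [RHS]big_mkcond; apply: eq_bigr => p _.
by rewrite inE; case: (p \in _); case: (flat_tail l p).
Qed.

Theorem mainTheorem12 (K : fieldType) (x : K) (k r l : nat) :
  (r <= k)%N -> (l <= k)%N ->
  chi x r (one_lk l k) = (if (r <= l)%N then (mkr l r)%:R else 0).
Proof.
move=> _ lk; rewrite chi_one_lk card_flat_tail //.
by case: leqP => // /mkr_eq0 ->.
Qed.
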